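(* Let $P_1, \ldots, P_M$ be probability densities on a space $\mathcal{X}$, and let $\pi_1, \ldots, \pi_M \in [0,1]$ with $\sum_{i=1}^M \pi_i = 1$ be arbitrary weights. Then $$ JS(P_1, \ldots, P_M) \le JS_{GM}(P_1, \ldots, P_M), $$ where $JS(P_1,\ldots,P_M) = \sum_{i=1}^M \pi_i\, KL\big(P_i \,\Vert\, \overline{P}\big)$ with $\overline{P} = \sum_{i=1}^M \pi_i P_i$, and $JS_{GM}(P_1,\ldots,P_M) = \sum_{i=1}^M \sum_{j \neq i} \pi_i \pi_j\, KL(P_i \Vert P_j)$.
   Context: For densities $P, Q$ on $\mathcal{X}$, $KL(P\Vert Q) = \int_{\mathcal{X}} P(x)\ln\frac{P(x)}{Q(x)}\,dx$ (the Kullback–Leibler divergence). The quantity $JS_{GM}$ equals $\sum_{i=1}^M \pi_i \int_{\mathcal{X}} P_i(x)\ln\frac{P_i(x)}{\overline{P}'(x)}\,dx$ where $\overline{P}' = \prod_{j=1}^M P_j^{\pi_j}$ is the weighted geometric mean (not necessarily a probability density); it is called the Jensen–Shannon divergence with geometric mean. *)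

From HB Require Import structures.
From mathcomp Require Import all_boot all_order all_algebra.
From mathcomp Require Import all_classical all_reals all_analysis.
Set Implicit Arguments. Unset Strict Implicit. Unset Printing Implicit Defensive.
Import Order.TTheory GRing.Theory Num.Theory.
Local Open Scope ring_scope.
Local Open Scope ereal_scope.

Definition kl_integrand (R : realType) (p q : R) : \bar R :=
  if p == 0%R then 0 else if q == 0%R then +oo else (p * ln (p / q))%:E.

Definition KL (d : measure_display) (T : measurableType d) (R : realType)
  (mu : {measure set T -> \bar R}) (P Q : T -> R) : \bar R :=
  \int[mu]_x kl_integrand (P x) (Q x).

Definition is_density (d : measure_display) (T : measurableType d) (R : realType)
  (mu : {measure set T -> \bar R}) (P : T -> R) : Prop :=
  measurable_fun setT P /\ (forall x, (0 <= P x)%R) /\ \int[mu]_x (P x)%:E = 1.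

Definition mixture (T : Type) (R : realType) (M : nat) (pi : 'I_M -> R)
  (P : 'I_M -> T -> R) : T -> R :=
  fun x => (\sum_(i < M) pi i * P i x)%R.

Definition JS (d : measure_display) (T : measurableType d) (R : realType)
  (mu : {measure set T -> \bar R}) (M : nat) (pi : 'I_M -> R)
  (P : 'I_M -> T -> R) : \bar R :=
  \sum_(i < M) (pi i)%:E * KL mu (P i) (mixture pi P).

Definition JS_GM (d : measure_display) (T : measurableType d) (R : realType)
  (mu : {measure set T -> \bar R}) (M : nat) (pi : 'I_M -> R)
  (P : 'I_M -> T -> R) : \bar R :=
  \sum_(i < M) \sum_(j < M | j != i) (pi i * pi j)%:E * KL mu (P i) (P j).

From HB Require Import structures.
From mathcomp Require Import all_boot all_order all_algebra.
From mathcomp Require Import all_classical all_reals all_analysis.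
From mathcomp Require Import lra.
From mathcomp Require Import measurable_realfun.
Set Implicit Arguments.
Unset Strict Implicit.
Unset Printing Implicit Defensive.
Import Order.TTheory GRing.Theory Num.Theory.
Local Open Scope ring_scope.

(* Pointwise, p ln (p/q) is convex in q because ln is concave (Jensen's
   inequality for ln, from the tangent bound ln x <= x - 1); integrating gives
   KL(P_i || Pbar) <= \sum_j pi_j KL(P_i || P_j).  Weighting by pi_i and
   summing over i bounds JS by \sum_(i, j) pi_i pi_j KL(P_i || P_j), whose
   diagonal terms KL(P_i || P_i) vanish.
   The KL integrand may change sign, so every integral is taken of the shifted
   integrand p ln (p/q) + q >= p >= 0, whose integral is KL + 1 when q is a
   density. *)

Section kl_integrand.
Variable R : realType.
Implicit Types (p q : R) (M : nat).

Lemma ln_le_subr1 (x : R) : 0 < x -> ln x <= x - 1.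
Proof.
move=> x0; have := @le_ln1Dx R (x - 1); rewrite addrCA subrr addr0; apply; lra.
Qed.

Lemma convex_comb_gt0 M (pi q : 'I_M -> R) :
  (forall j, 0 <= pi j) -> (forall j, 0 < pi j -> 0 < q j) ->
  \sum_(j < M) pi j = 1 -> 0 < \sum_(j < M) pi j * q j.
Proof.
move=> pi0 q0 pi1.
have pq0 j : 0 <= pi j * q j.
  have := pi0 j; rewrite le_eqVlt => /predU1P[<-|/[dup] pj /q0 qj].
    by rewrite mul0r.
  by rewrite mulr_ge0 // ltW.
have [j /andP[_ pj]] : exists j, true && (0 < pi j).
  by apply: psumr_neq0P => //; rewrite pi1; exact/eqP/oner_neq0.
rewrite lt_def sumr_ge0 // andbT psumr_neq0 //; apply/hasP; exists j.
  exact: mem_index_enum.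
by rewrite mulr_gt0 // q0.
Qed.

Lemma sum_ln_le_ln_sum M (pi q : 'I_M -> R) :
  (forall j, 0 <= pi j) -> (forall j, 0 < pi j -> 0 < q j) ->
  \sum_(j < M) pi j = 1 ->
  \sum_(j < M) pi j * ln (q j) <= ln (\sum_(j < M) pi j * q j).
Proof.
move=> pi0 q0 pi1; set m := \sum_(j < M) pi j * q j.
have m0 : 0 < m := convex_comb_gt0 pi0 q0 pi1.
have tangent j : pi j * ln (q j) <= pi j * ln m + (pi j * q j / m - pi j).
  have := pi0 j; rewrite le_eqVlt => /predU1P[<-|pj].
    by rewrite !mul0r subrr addr0.
  have := ln_le_subr1 (divr_gt0 (q0 _ pj) m0).
  rewrite ln_div ?posrE ?q0 // => /(ler_wpM2l (ltW pj)).
  rewrite mulrBr mulrBr mulr1 mulrA; lra.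
apply: le_trans (ler_sum _ (fun j _ => tangent j)) _.
rewrite big_split /= sumrB -!mulr_suml pi1 -/m mulfV ?gt_eqF // mul1r subrr.
by rewrite addr0.
Qed.

Lemma kl_integrand_addr_ge p q : 0 <= p -> 0 <= q ->
  (p%:E <= kl_integrand p q + q%:E)%E.
Proof.
move=> p0 q0; rewrite /kl_integrand.
have [->|pn0] := eqVneq p 0; first by rewrite add0e lee_fin.
have [->|qn0] := eqVneq q 0; first by rewrite addye ?leey.
have pp : 0 < p by rewrite lt_def pn0.
have qp : 0 < q by rewrite lt_def qn0.
have := ln_le_subr1 (divr_gt0 qp pp).
rewrite -EFinD lee_fin !ln_div ?posrE // => /(ler_wpM2l (ltW pp)).
by rewrite mulrBr mulrBr mulr1 mulrCA divff // mulr1; lra.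
Qed.

Lemma kl_integrandxx p : kl_integrand p p = 0%E.
Proof.
by rewrite /kl_integrand; have [|pn0] := eqVneq p 0; rewrite ?divff ?ln1 ?mulr0.
Qed.

Lemma kl_integrand_convex M (pi q : 'I_M -> R) p :
  0 <= p -> (forall j, 0 <= pi j) -> (forall j, 0 <= q j) ->
  \sum_(j < M) pi j = 1 ->
  (kl_integrand p (\sum_(j < M) pi j * q j) <=
   \sum_(j < M) (pi j)%:E * kl_integrand p (q j))%E.
Proof.
move=> p0 pi0 q0 pi1.
have [->|pn0] := eqVneq p 0.
  by rewrite /kl_integrand eqxx big1 // => j _; rewrite mule0.
have pp : 0 < p by rewrite lt_def pn0.
have [[j [pj qj]]|no_null] := pselect (exists j, 0 < pi j /\ q j = 0).
  suff -> : (\sum_(j < M) (pi j)%:E * kl_integrand p (q j) = +oo)%E.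
    exact: leey.
  apply/esum_eqyP => [i _|].
    have := pi0 i; rewrite le_eqVlt => /predU1P[<-|pi_pos].
      by rewrite mul0e.
    rewrite /kl_integrand; case: ifP => _; first by rewrite mule0.
    by case: ifP => _; rewrite ?gt0_muley // -EFinM.
  exists j; split=> //.
  by rewrite /kl_integrand (negbTE pn0) qj eqxx gt0_muley ?lte_fin.
have q_pos i : 0 < pi i -> 0 < q i.
  move=> pi_pos; rewrite lt_def q0 andbT; apply/eqP => qi.
  by apply: no_null; exists i.
set m := \sum_(j < M) pi j * q j.
have m0 : 0 < m := convex_comb_gt0 pi0 q_pos pi1.
rewrite (eq_bigr (fun j => (pi j * (p * ln p - p * ln (q j)))%:E)); last first.
  move=> j _; have := pi0 j; rewrite le_eqVlt => /predU1P[<-|pj].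
    by rewrite mul0e mul0r.
  rewrite /kl_integrand (negbTE pn0) gt_eqF ?q_pos // -EFinM.
  by rewrite ln_div ?posrE ?q_pos // mulrBr.
rewrite /kl_integrand (negbTE pn0) gt_eqF // sumEFin lee_fin.
rewrite ln_div ?posrE // mulrBr.
under eq_bigr do rewrite mulrBr !(mulrCA (pi _) p) -mulrBr.
rewrite -mulr_sumr sumrB -mulr_suml pi1 mul1r -mulrBr ler_wpM2l //.
by rewrite lerD2l lerN2 sum_ln_le_ln_sum.
Qed.
End kl_integrand.

Section integral_shift.
Context d (T : measurableType d) (R : realType).
Variable mu : {measure set T -> \bar R}.
Local Open Scope ereal_scope.

Lemma integral_shift (f : T -> \bar R) (g : T -> R) :
  measurable_fun setT f -> measurable_fun setT g -> (forall x, 0 <= g x)%R ->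
  (forall x, 0 <= f x + (g x)%:E) -> \int[mu]_x (g x)%:E \is a fin_num ->
  \int[mu]_x f x = \int[mu]_x (f x + (g x)%:E) - \int[mu]_x (g x)%:E.
Proof.
move=> mf mg g0 fg0 ig_fin.
have mG : measurable_fun setT (fun x => (g x)%:E) by exact/measurable_EFinP.
have g0E x : 0 <= (g x)%:E by rewrite lee_fin.
have neg_le x : f^\- x <= (g x)%:E.
  rewrite funenegE ge_max g0E andbT.
  move: (fg0 x); case: (f x) => [r| |] //= h; last exact: leNye.
  by rewrite lee_fin; rewrite lee_fin in h; lra.
have neg_fin x : f^\- x \is a fin_num.
  by rewrite ge0_fin_numE ?funeneg_ge0 // (le_lt_trans (neg_le x)) ?ltry.
have shift : (fun x => f x + (g x)%:E + f^\- x) = (fun x => f^\+ x + (g x)%:E).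
  by apply/funext => x; rewrite {1}(funeposneg f) addeAC (subeK _ (neg_fin x)).
have := ge0_integralD mu measurableT (fun x _ => fg0 x) (emeasurable_funD mf mG)
  (fun x _ => funeneg_ge0 f x) (measurable_funeneg mf).
rewrite shift (ge0_integralD mu measurableT (fun x _ => funepos_ge0 f x)
  (measurable_funepos mf) (fun x _ => g0E x) mG) => sumD.
have negI_fin : \int[mu]_x f^\- x \is a fin_num.
  rewrite ge0_fin_numE; last by apply: integral_ge0 => x _; exact: funeneg_ge0.
  apply: (@le_lt_trans _ _ (\int[mu]_x (g x)%:E)).
    by apply: ge0_le_integral => //; exact: measurable_funeneg.
  by case/fin_numPlt/andP: ig_fin.
rewrite integralE -[\int[mu]_x f^\+ x](addeK _ ig_fin) sumD.
by rewrite addeAC addeK.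
Qed.
End integral_shift.

Section kullback_leibler.
Context d (T : measurableType d) (R : realType).
Variable mu : {measure set T -> \bar R}.
Implicit Types f g : T -> R.

Lemma measurable_kl_integrand f g :
  measurable_fun setT f -> measurable_fun setT g ->
  (forall x, 0 <= f x) -> (forall x, 0 <= g x) ->
  measurable_fun setT (fun x => kl_integrand (f x) (g x)).
Proof.
move=> mf mg f0 g0.
rewrite (_ : (fun x => kl_integrand (f x) (g x)) = fun x =>
  if f x == 0 then 0%E else if g x == 0 then +oo%E
  else (f x * (ln (f x) - ln (g x)))%:E); last first.
  apply/funext => x; rewrite /kl_integrand.
  have [//|fn0] := eqVneq (f x) 0; have [//|gn0] := eqVneq (g x) 0.
  by rewrite ln_div // posrE lt_def ?fn0 ?gn0 ?f0 ?g0.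
apply: measurable_fun_ifT; first exact: measurable_fun_eqr.
  exact: measurable_cst.
apply: measurable_fun_ifT; first exact: measurable_fun_eqr.
  exact: measurable_cst.
apply/measurable_EFinP; apply: measurable_funM => //.
by apply: measurable_funB; exact: measurableT_comp.
Qed.

Lemma measurable_kl_integrandDr f g :
  measurable_fun setT f -> measurable_fun setT g ->
  (forall x, 0 <= f x) -> (forall x, 0 <= g x) ->
  measurable_fun setT (fun x => kl_integrand (f x) (g x) + (g x)%:E)%E.
Proof.
move=> mf mg f0 g0; apply: emeasurable_funD.
  exact: measurable_kl_integrand.
exact/measurable_EFinP.
Qed.

Lemma KL_shiftE f g : measurable_fun setT f -> (forall x, 0 <= f x) ->
  is_density mu g ->
  KL mu f g = (\int[mu]_x (kl_integrand (f x) (g x) + (g x)%:E) - 1)%E.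
Proof.
move=> mf f0 [mg [g0 ig]]; rewrite /KL -ig; apply: integral_shift => //.
- exact: measurable_kl_integrand.
- move=> x; apply: le_trans (kl_integrand_addr_ge (f0 x) (g0 x)).
  by rewrite lee_fin.
- by rewrite ig.
Qed.

Lemma KL_ge0 f g : is_density mu f -> is_density mu g -> (0 <= KL mu f g)%E.
Proof.
move=> [mf [f0 if1]] dg; have [mg [g0 _]] := dg.
rewrite KL_shiftE // sube_ge0 // -if1.
apply: ge0_le_integral => //.
- by move=> x _; rewrite lee_fin.
- exact/measurable_EFinP.
- exact: measurable_kl_integrandDr.
- by move=> x _; exact: kl_integrand_addr_ge.
Qed.

Lemma KLxx f : KL mu f f = 0%E.
Proof.
by rewrite /KL; under eq_integral do rewrite kl_integrandxx; exact: integral0.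
Qed.

Lemma is_density_mixture M (pi : 'I_M -> R) (P : 'I_M -> T -> R) :
  (forall j, is_density mu (P j)) -> (forall j, 0 <= pi j) ->
  \sum_(j < M) pi j = 1 -> is_density mu (mixture pi P).
Proof.
move=> dP pi0 pi1.
have mP j : measurable_fun setT (fun x => pi j * P j x).
  by apply: measurable_funM => //; case: (dP j).
have P0 j x : 0 <= pi j * P j x by case: (dP j) => _ [P0 _]; rewrite mulr_ge0.
split; first exact: measurable_sum.
split; first by move=> x; exact: sumr_ge0.
rewrite /mixture; under eq_integral do rewrite -sumEFin.
rewrite ge0_integral_sum //; last first.
- by move=> j x _; rewrite lee_fin.
- by move=> j; exact/measurable_EFinP.
rewrite -pi1 -sumEFin; apply: eq_bigr => j _.
have [mPj [Pj0 iPj]] := dP j.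
under eq_integral do rewrite EFinM.
rewrite ge0_integralZl_EFin ?iPj ?mule1 //.
- by move=> x _; rewrite lee_fin.
- exact/measurable_EFinP.
Qed.

Lemma KL_mixture_le M (pi : 'I_M -> R) (P : 'I_M -> T -> R) f :
  is_density mu f -> (forall j, is_density mu (P j)) ->
  (forall j, 0 <= pi j) -> \sum_(j < M) pi j = 1 ->
  (KL mu f (mixture pi P) <= \sum_(j < M) (pi j)%:E * KL mu f (P j))%E.
Proof.
move=> df dP pi0 pi1; have [mf [f0 _]] := df.
have dm := is_density_mixture dP pi0 pi1; have [mm [m0 _]] := dm.
have mP j : measurable_fun setT (P j) by case: (dP j).
have P0 j x : 0 <= P j x by case: (dP j) => _ [].
have shift_ge0 g x : 0 <= g x ->
    (0 <= kl_integrand (f x) (g x) + (g x)%:E)%E.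
  move=> g0; apply: le_trans (kl_integrand_addr_ge (f0 x) g0).
  by rewrite lee_fin.
rewrite KL_shiftE // leeBlDr //.
apply: (@le_trans _ _ (\int[mu]_x \sum_(j < M)
    (pi j)%:E * (kl_integrand (f x) (P j x) + (P j x)%:E))%E).
  apply: ge0_le_integral => //.
  - by move=> x _; exact: shift_ge0.
  - exact: measurable_kl_integrandDr.
  - apply: emeasurable_sum => j; apply: measurable_funeM.
    exact: measurable_kl_integrandDr.
  - move=> x _; under eq_bigr do rewrite muleDr ?fin_num_adde_defl // -EFinM.
    rewrite big_split sumEFin /=; apply: leeD2r.
    exact: kl_integrand_convex.
rewrite ge0_integral_sum //; last first.
- by move=> j x _; apply: mule_ge0; rewrite ?lee_fin ?shift_ge0.
- by move=> j; apply: measurable_funeM; exact: measurable_kl_integrandDr.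
have KLj j : (\int[mu]_x (kl_integrand (f x) (P j x) + (P j x)%:E) =
    KL mu f (P j) + 1)%E by rewrite KL_shiftE // subeK.
under eq_bigr => j _.
  rewrite ge0_integralZl_EFin //; last first.
  - exact: measurable_kl_integrandDr.
  - by move=> x _; exact: shift_ge0.
  rewrite KLj ge0_muleDr ?KL_ge0 // mule1.
  over.
by rewrite big_split /= sumEFin pi1.
Qed.
End kullback_leibler.

Theorem proposition2 (d : measure_display) (T : measurableType d) (R : realType)
  (mu : {measure set T -> \bar R}) (M : nat) (pi : 'I_M -> R)
  (P : 'I_M -> T -> R)
  (hP : forall i, is_density mu (P i))
  (hpi : forall i, 0 <= pi i <= 1)
  (hsum : \sum_(i < M) pi i = 1) :
  (JS mu pi P <= JS_GM mu pi P)%E.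
Proof.
have pi0 i : 0 <= pi i by case/andP: (hpi i).
rewrite /JS /JS_GM; apply: lee_sum => i _.
apply: le_trans (lee_wpmul2l _ (KL_mixture_le (hP i) hP pi0 hsum)) _.
  by rewrite lee_fin.
rewrite ge0_sume_distrr; last first.
  by move=> j _; apply: mule_ge0; rewrite ?lee_fin ?KL_ge0.
rewrite (bigD1 i) //= KLxx mule0 mule0 add0e.
by apply: lee_sum => j _; rewrite muleA -EFinM.
Qed.
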